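(* Let $X$ be a topological quandle and let $\{X_\alpha\}$ be the decomposition of $X$ into its path components. Then $H_n(X)\cong\bigoplus_\alpha H_n(X_\alpha)$ for every $n$, where $H_n(X_\alpha)$ is the homology of the subcomplex of $C_*(X)$ spanned by singular simplices with image in $X_\alpha$.
   Context: A quandle is a set with a binary operation $\triangleright$ such that $x\triangleright x=x$, each $\beta_y(x)=x\triangleright y$ is bijective, and $(x\triangleright y)\triangleright z=(x\triangleright z)\triangleright(y\triangleright z)$. A topological quandle is a topological space with a continuous quandle operation such that every $\beta_y$ is a homeomorphism. Let $\Delta^n$ have vertices $e_0,\dots,e_n$ ($\Delta^{n-1}$ has vertices $\bar e_0,\dots,\bar e_{n-1}$). For a singular $n$-simplex $\sigma:\Delta^n\to X$ write $\sigma=\sigma_{[x_1,\dots,x_{n+1}]}$ with $x_i=\sigma(e_{i-1})$; singular simplices are combined pointwise by $(\sigma\triangleright\tau)(t)=\sigma(t)\triangleright\tau(t)$. $C_n(X)$ is the free abelian group on singular $n$-simplices. For $2\le i\le n+1$, $d_i\sigma$ is $\sigma$ restricted to the face omitting $e_{i-1}$ (via $\bar e_j\mapsto e_j$ for $j\le i-2$, $\bar e_j\mapsto e_{j+1}$ for $j\ge i-1$), and $s_i\sigma=\sigma\circ\iota_i$ with $\iota_i(\sum t_j\bar e_j)=(\sum_{k=0}^{i-2}t_k)e_{i-1}+\sum_{j=i-1}^{n-1}t_je_{j+1}$. The boundary is $\partial_n\sigma=\sum_{i=2}^{n+1}(-1)^i(d_i\sigma-d_i\sigma\triangleright s_i\sigma)$,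 extended linearly ($\partial_0=0$); $H_n(X)$ is the $n$-th homology of $(C_*(X),\partial)$. *)

From HB Require Import structures.
From mathcomp Require Import all_boot all_order all_algebra.
From mathcomp Require Import all_classical all_reals all_analysis.
From mathcomp Require Import Rstruct Rstruct_topology.
From mathcomp.multinomials Require Import freeg.

Set Implicit Arguments.
Unset Strict Implicit.
Unset Printing Implicit Defensive.

Import Order.TTheory GRing.Theory Num.Theory.
Local Open Scope classical_set_scope.
Local Open Scope ring_scope.

Notation RR := Rdefinitions.R.

Definition homeomorphism {S T : topologicalType} (f : S -> T) : Prop :=
  exists g : T -> S, [/\ cancel f g, cancel g f, continuous f & continuous g].

Definition quandle_axioms {X : Type} (op : X -> X -> X) : Prop :=
  [/\ forall x, op x x = x,
      forall y, bijective (fun x => op x y) &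
      forall x y z, op (op x y) z = op (op x z) (op y z)].

Definition topological_quandle (X : topologicalType) (op : X -> X -> X) : Prop :=
  [/\ quandle_axioms op,
      continuous (fun p : X * X => op p.1 p.2) &
      forall y, homeomorphism (fun x => op x y)].

Definition stdsimplex (n : nat) : set 'rV[RR]_n.+1 :=
  [set t | (forall i, 0 <= t ord0 i) /\ \sum_i t ord0 i = 1].

Arguments stdsimplex n : clear implicits.

Definition vtx (n : nat) (j : 'I_n.+1) : 'rV[RR]_n.+1 := \row_k (k == j)%:R.

(* A singular n-simplex sigma : Delta^n -> X is represented by its canonical
   extension to the whole of 'rV_n.+1, constant equal to sigma(e_0) outside
   Delta^n; this makes singular simplices <-> continuous maps Delta^n -> X a
   bijection. *)
Definition is_singular (X : topologicalType) (n : nat) (f : 'rV[RR]_n.+1 -> X)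
  : Prop :=
  {within stdsimplex n, continuous f} /\
  (forall t, ~ stdsimplex n t -> f t = f (vtx ord0)).

Definition normalize (X : Type) (n : nat) (f : 'rV[RR]_n.+1 -> X)
  : 'rV[RR]_n.+1 -> X :=
  fun t => if `[< stdsimplex n t >] then f t else f (vtx ord0).

Arguments normalize X n f : clear implicits.

(* face map Delta^n -> Delta^(n+1) omitting the vertex e_m
   (bar e_j |-> e_j for j < m, bar e_j |-> e_(j+1) for j >= m) *)
Definition face_map (n : nat) (m : 'I_n.+2) (t : 'rV[RR]_n.+1) : 'rV[RR]_n.+2 :=
  \row_k (match unlift m k with Some j => t ord0 j | None => 0 end).

(* the map iota: sum_j t_j bar e_j |->
   (sum_(j < m) t_j) e_m + sum_(j >= m) t_j e_(j+1) *)
Definition degen_map (n : nat) (m : 'I_n.+2) (t : 'rV[RR]_n.+1) : 'rV[RR]_n.+2 :=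
  \row_k (match unlift m k with
          | None => \sum_(j < n.+1 | (j < m)%N) t ord0 j
          | Some j => if (k < m)%N then 0 else t ord0 j
          end).

(* With i = m + 1 (2 <= i <= n+2):  d_i sigma and s_i sigma *)
Definition dface (X : Type) (n : nat) (m : 'I_n.+2) (s : 'rV[RR]_n.+2 -> X)
  : 'rV[RR]_n.+1 -> X := normalize X n (s \o face_map m).

Definition sdegen (X : Type) (n : nat) (m : 'I_n.+2) (s : 'rV[RR]_n.+2 -> X)
  : 'rV[RR]_n.+1 -> X := normalize X n (s \o degen_map m).

Definition sop (X : Type) (op : X -> X -> X) (n : nat) (s t : 'rV[RR]_n.+1 -> X)
  : 'rV[RR]_n.+1 -> X := fun u => op (s u) (t u).

(* C_n(X) is the subgroup of chains supported on singular simplices.   *)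

Definition chain (X : topologicalType) (n : nat) :=
  {freeg ('rV[RR]_n.+1 -> X) / int}.

(* boundary of a generator sigma of degree n+1 :
   sum_(i=2)^(n+2) (-1)^i (d_i sigma - d_i sigma |> s_i sigma) *)
Definition bd_gen (X : topologicalType) (op : X -> X -> X) (n : nat)
  (s : 'rV[RR]_n.+2 -> X) : chain X n :=
  \sum_(m < n.+2 | (0 < m)%N)
     ((-1) ^+ m.+1 : int) *: (<< dface m s >> - << sop op (dface m s) (sdegen m s) >>).

Definition bd (X : topologicalType) (op : X -> X -> X) (n : nat)
  : chain X n.+1 -> chain X n := fglift (@bd_gen X op n).

Definition simplex_in (X : topologicalType) (A : set X) (n : nat)
  (s : 'rV[RR]_n.+1 -> X) : Prop :=
  is_singular s /\ s @` stdsimplex n `<=` A.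

Definition chains_in (X : topologicalType) (A : set X) (n : nat) : set (chain X n) :=
  [set c | forall s, s \in dom c -> simplex_in A s].

Arguments chains_in X A n : clear implicits.

Definition is_cycle (X : topologicalType) (op : X -> X -> X) (n : nat)
  : chain X n -> Prop :=
  match n with
  | 0 => fun _ => True                      (* partial_0 = 0 *)
  | n'.+1 => fun c => bd op c = 0
  end.

Definition cycles (X : topologicalType) (op : X -> X -> X) (A : set X) (n : nat)
  : set (chain X n) := [set c | chains_in X A n c /\ is_cycle op c].

Arguments cycles X op A n : clear implicits.

Definition boundaries (X : topologicalType) (op : X -> X -> X) (A : set X)
  (n : nat) : set (chain X n) := [set bd op c | c in chains_in X A n.+1].

Arguments boundaries X op A n : clear implicits.

Definition coset {G : zmodType} (B : set G) (z : G) : set G := [set z + b | b in B].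

(* Z / B, as the set of cosets z + B, z in Z; the group law is setadd and
   the neutral element is B *)
Definition subquot {G : zmodType} (Z B : set G) : set (set G) :=
  [set S | exists2 z, Z z & S = coset B z].

Definition setadd {G : zmodType} (S T : set G) : set G :=
  [set s + t | s in S & t in T].

(* H_n of the subcomplex spanned by simplices with image in A
   (A = setT gives H_n(X)) *)
Definition homology (X : topologicalType) (op : X -> X -> X) (A : set X) (n : nat)
  : set (set (chain X n)) := subquot (cycles X op A n) (boundaries X op A n).

Arguments homology X op A n : clear implicits.

Definition dsum {I : Type} {G : Type} (H : I -> set G) (zero : I -> G) : set (I -> G) :=
  [set h | (forall i, H i (h i)) /\ finite_set [set i | h i <> zero i]].

Definition group_iso {A B : Type} (PA : set A) (addA : A -> A -> A)
  (PB : set B) (addB : B -> B -> B) : Prop :=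
  exists f : A -> B,
    [/\ forall a, PA a -> PB (f a),
        forall a a', PA a -> PA a' -> f (addA a a') = addB (f a) (f a'),
        forall a a', PA a -> PA a' -> f a = f a' -> a = a' &
        forall b, PB b -> exists2 a, PA a & f a = b].

Definition path_rel (X : topologicalType) (x y : X) : Prop :=
  exists g : RR -> X,
    [/\ {within `[(0 : RR), 1], continuous g}, g 0 = x & g 1 = y].

Definition path_component (X : topologicalType) (x : X) : set X :=
  [set y | path_rel x y].

Definition path_components (X : topologicalType) : Type :=
  {A : set X | exists x, A = path_component x}.

(* Every singular simplex s lies in the path component of its first vertex
   s(e_0), and so does every term of its boundary: the faces d_i s with i >= 2
   keep the vertex e_0, and the first vertex s(e_0) |> s(e_(i-1)) of
   d_i s |> s_i s is joined to s(e_0) |> s(e_0) = s(e_0) by applying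
   s(e_0) |> - to a path from s(e_0) to s(e_(i-1)), the operation being
   continuous.  Hence the projection of chains onto the simplices of one path
   component is a chain map, C_*(X) is the direct sum of the subcomplexes
   C_*(X_alpha), and cycles and boundaries split componentwise. *)

From HB Require Import structures.
From mathcomp Require Import all_boot all_order all_algebra.
From mathcomp Require Import all_classical all_reals all_analysis.
From mathcomp Require Import Rstruct Rstruct_topology.
From mathcomp.multinomials Require Import freeg.
From mathcomp Require Import ring lra zify.

Set Implicit Arguments.
Unset Strict Implicit.
Unset Printing Implicit Defensive.

Import Order.TTheory GRing.Theory Num.Theory.
Local Open Scope classical_set_scope.
Local Open Scope ring_scope.

Lemma continuous_within_comp (T U V : topologicalType) (A : set T) (B : set U)
    (f : T -> U) (g : U -> V) :
  {within A, continuous f} -> (forall x, A x -> B (f x)) ->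
  {within B, continuous g} -> {within A, continuous (g \o f)}.
Proof.
move=> /subspace_continuousP cf fAB /subspace_continuousP cg.
apply/subspace_continuousP => x Ax W /= /(cg _ (fAB _ Ax)) gW.
have := cf _ Ax _ gW; rewrite !nbhs_simpl /= /within /=.
by apply: filterS => t Wt At; exact: Wt At (fAB _ At).
Qed.

Lemma affine_continuous (V : normedModType RR) (v w : V) :
  continuous (fun t : RR => t *: v + w).
Proof.
move=> t; have cid : {for t, continuous (@id RR)} by exact: cvg_id.
have cZ : {for t, continuous (fun s : RR => s *: v)} by exact: continuousZl.
have cw : {for t, continuous (fun=> w)} by exact: cst_continuous.
exact: continuousD cZ cw.
Qed.

Lemma in_itvcc (a b t : RR) : `[a, b]%classic t <-> a <= t <= b.
Proof. by rewrite /= in_itv. Qed.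

Section Paths.
Variable X : topologicalType.
Implicit Types x y z : X.

Lemma path_rel_sym x y : path_rel x y -> path_rel y x.
Proof.
case=> g [cg g0 g1]; exists (g \o fun t : RR => t * -1 + 1); split.
- apply: continuous_within_comp cg.
  + by apply: continuous_subspaceT; exact: (@affine_continuous RR^o).
  + by move=> t /in_itvcc t01; apply/in_itvcc; lra.
- by rewrite /= mul0r add0r.
- by rewrite /= mul1r addNr.
Qed.

Lemma path_rel_trans x y z : path_rel x y -> path_rel y z -> path_rel x z.
Proof.
case=> g [cg g0 g1] [h [ch h0 h1]].
pose k t := if t <= 2^-1 then g (t * 2 + 0) else h (t * 2 + -1).
exists k; split; first last.
- by rewrite /k ifF; [have -> : 1 * 2 + -1 = 1 :> RR by lra | apply/negbTE; rewrite -ltNge; lra].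
- by rewrite /k ifT ?mul0r ?addr0 //; lra.
have -> : `[(0 : RR), 1]%classic = `[0, 2^-1] `|` `[2^-1, 1].
  apply/seteqP; split => t /=.
    by move/in_itvcc => t01; case: (leP t 2^-1) => ?; [left | right]; apply/in_itvcc; lra.
  by case=> /in_itvcc ?; apply/in_itvcc; lra.
apply: withinU_continuous; [exact: interval_closed | exact: interval_closed | |].
- have cgk : {within `[(0 : RR), 2^-1], continuous (g \o fun t : RR => t * 2 + 0)}.
    apply: continuous_within_comp cg.
    + by apply: continuous_subspaceT; exact: (@affine_continuous RR^o).
    + by move=> t /in_itvcc ?; apply/in_itvcc; lra.
  apply: subspace_eq_continuous cgk => t /set_mem /in_itvcc ?.
  by rewrite /from_subspace /k /= ifT //; lra.
- have chk : {within `[(2^-1 : RR), 1], continuous (h \o fun t : RR => t * 2 + -1)}.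
    apply: continuous_within_comp ch.
    + by apply: continuous_subspaceT; exact: (@affine_continuous RR^o).
    + by move=> t /in_itvcc ?; apply/in_itvcc; lra.
  apply: subspace_eq_continuous chk => t /set_mem /in_itvcc ?.
  rewrite /from_subspace /k /=; case: ifP => // t_half.
  have -> : t = 2^-1 by lra.
  by rewrite (_ : 2^-1 * 2 + -1 = 0) ?h0 -?g1; [congr g; lra | lra].
Qed.

Lemma path_component_eq x y : path_rel x y -> path_component x = path_component y.
Proof.
move=> xy; apply/seteqP; split => z /=; last exact: path_rel_trans.
exact/path_rel_trans/path_rel_sym.
Qed.

End Paths.

Lemma stdsimplex_vtx n (j : 'I_n.+1) : stdsimplex n (vtx j).
Proof.
split=> [i|]; first by rewrite mxE ler0n.
rewrite (bigD1 j) //= big1 => [|i /negbTE ij]; rewrite mxE ?eqxx ?addr0 //.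
by rewrite ij.
Qed.

Lemma stdsimplex_segment n (p q : 'rV[RR]_n.+1) (t : RR) :
  stdsimplex n p -> stdsimplex n q -> 0 <= t <= 1 ->
  stdsimplex n (t *: (q - p) + p).
Proof.
move=> [p_ge0 p_sum] [q_ge0 q_sum] t01; split => [i|].
  by rewrite !mxE; have := p_ge0 i; have := q_ge0 i; nra.
rewrite (eq_bigr (fun i => t * q ord0 i + (1 - t) * p ord0 i)); last first.
  by move=> i _; rewrite !mxE; ring.
by rewrite big_split /= -!mulr_sumr p_sum q_sum; ring.
Qed.

Lemma singular_path_rel (X : topologicalType) n (s : 'rV[RR]_n.+1 -> X) p :
  is_singular s -> stdsimplex n p -> path_rel (s (vtx ord0)) (s p).
Proof.
move=> [cs _] p_in; exists (s \o fun t : RR => t *: (p - vtx ord0) + vtx ord0).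
split; last by rewrite /= scale1r subrK.
- apply: continuous_within_comp cs.
  + by apply: continuous_subspaceT; exact: affine_continuous.
  + by move=> t /in_itvcc t01; apply: stdsimplex_segment => //; exact: stdsimplex_vtx.
- by rewrite /= scale0r add0r.
Qed.

Lemma face_map_vtx0 n (m : 'I_n.+2) : m != ord0 ->
  face_map m (vtx (ord0 : 'I_n.+1)) = vtx ord0.
Proof.
move=> m_neq0; apply/rowP => k; rewrite !mxE.
case: unliftP => [j ->|->]; last by rewrite (negbTE m_neq0).
rewrite mxE -!val_eqE /= /bump; congr (_ %:R).
by move: m_neq0; rewrite -lt0n; case: leqP => /=; lia.
Qed.

Lemma degen_map_vtx0 n (m : 'I_n.+2) : m != ord0 ->
  degen_map m (vtx (ord0 : 'I_n.+1)) = vtx m.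
Proof.
move=> m_neq0; have m_gt0 : (0 < m)%N by rewrite lt0n.
apply/rowP => k; rewrite !mxE; case: unliftP => [j ->|->].
  rewrite eq_sym (negbTE (neq_lift _ _)) mxE.
  case: ifP => // m_le; case: eqP m_le => [j0|//].
  by rewrite /= /bump j0 /= leqn0 (gtn_eqF m_gt0) /= m_gt0.
rewrite eqxx (bigD1 ord0) //= big1 ?addr0 ?mxE ?eqxx // => i /andP [_ i_neq0].
by rewrite mxE (negbTE i_neq0).
Qed.

Lemma normalize_vtx0 (X : Type) n (f : 'rV[RR]_n.+1 -> X) :
  normalize X n f (vtx ord0) = f (vtx ord0).
Proof. by rewrite /normalize asboolT //; exact: stdsimplex_vtx. Qed.

Lemma path_rel_quandle (X : topologicalType) (op : X -> X -> X) (x y : X) :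
  topological_quandle op -> path_rel x y -> path_rel x (op x y).
Proof.
case=> [[op_xx _ _] cop _] [g [cg g0 g1]].
exists ((fun p : X * X => op p.1 p.2) \o fun t => (x, g t)); split.
- apply: (@continuous_within_comp _ _ _ _ setT) => //; last first.
    exact: continuous_subspaceT.
  apply/subspace_continuousP => t t01; apply: cvg_pair; first exact: cvg_cst.
  by move/subspace_continuousP : cg; apply.
- by rewrite /= g0 op_xx.
- by rewrite /= g1.
Qed.

HB.instance Definition _ (X : topologicalType) := gen_eqMixin (path_components X).
HB.instance Definition _ (X : topologicalType) := gen_choiceMixin (path_components X).

Section Components.
Variable X : topologicalType.

Definition component_of (x : X) : path_components X :=
  exist _ (path_component x) (ex_intro _ x erefl).

Lemma component_of_eq (x y : X) : path_rel x y -> component_of x = component_of y.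
Proof. by move=> xy; apply: eq_exist; exact: path_component_eq. Qed.

Definition simplex_component n (s : 'rV[RR]_n.+1 -> X) : path_components X :=
  component_of (s (vtx ord0)).

Lemma simplex_inP n (a : path_components X) (s : 'rV[RR]_n.+1 -> X) :
  simplex_in (sval a) s <-> is_singular s /\ simplex_component s = a.
Proof.
case: a => A [x A_eq] /=; split => [[s_sing s_sub]|[s_sing /(congr1 sval) /= <-]].
  split => //; apply: eq_exist; rewrite A_eq; apply/esym/path_component_eq.
  have : A (s (vtx ord0)) by apply: s_sub; exists (vtx ord0) => //; exact: stdsimplex_vtx.
  by rewrite A_eq.
by split => // _ [p p_in <-]; exact: singular_path_rel.
Qed.

Lemma simplex_inT n (s : 'rV[RR]_n.+1 -> X) : simplex_in setT s <-> is_singular s.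
Proof. by split => [[]|]. Qed.

Lemma simplex_component_dface n (m : 'I_n.+2) (s : 'rV[RR]_n.+2 -> X) :
  m != ord0 -> simplex_component (dface m s) = simplex_component s.
Proof.
by move=> m_neq0; rewrite /simplex_component /dface normalize_vtx0 /= face_map_vtx0.
Qed.

Lemma simplex_component_sop (op : X -> X -> X) n (m : 'I_n.+2) (s : 'rV[RR]_n.+2 -> X) :
  topological_quandle op -> is_singular s -> m != ord0 ->
  simplex_component (sop op (dface m s) (sdegen m s)) = simplex_component s.
Proof.
move=> qop s_sing m_neq0.
rewrite /simplex_component /sop /dface /sdegen !normalize_vtx0 /=.
rewrite face_map_vtx0 // degen_map_vtx0 //; apply/esym/component_of_eq.
by apply: path_rel_quandle => //; apply: singular_path_rel => //; exact: stdsimplex_vtx.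
Qed.

End Components.

Section Projection.
Variable X : topologicalType.
Implicit Types (a b : path_components X).

Definition pc_proj n a (c : chain X n) : chain X n :=
  fgmap (fun s => simplex_component s == a) id c.

Arguments pc_proj : simpl never.

Lemma coeff_pc_proj n a (c : chain X n) s :
  coeff s (pc_proj a c) = coeff s c *+ (simplex_component s == a).
Proof. exact: fgmap_f0_coeffE. Qed.

Lemma pc_proj_is_additive n a : additive (@pc_proj n a).
Proof.
by move=> c d; apply/eqP/freeg_eqP => s; rewrite !(coeffB, coeff_pc_proj) mulrnBl.
Qed.

HB.instance Definition _ n a :=
  GRing.isAdditive.Build (chain X n) (chain X n) (@pc_proj n a) (pc_proj_is_additive a).

Lemma pc_projZ n a k (c : chain X n) : pc_proj a (k *: c) = k *: pc_proj a c.
Proof. by apply/eqP/freeg_eqP => s; rewrite !(coeffZ, coeff_pc_proj) mulrnAr. Qed.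

Lemma pc_proj_supported n a b (c : chain X n) :
  {in dom c, forall s, simplex_component s = b} -> pc_proj a c = c *+ (b == a).
Proof.
move=> c_in_b; apply/eqP/freeg_eqP => s; rewrite coeff_pc_proj coeffMn.
by case: (boolP (s \in dom c)) => [/c_in_b -> //|/coeff_outdom ->]; rewrite !mul0rn.
Qed.

Lemma pc_projU n a k (s : 'rV[RR]_n.+1 -> X) :
  pc_proj a << k *g s >> = << k *g s >> *+ (simplex_component s == a).
Proof.
apply: pc_proj_supported => t; rewrite mem_dom coeffU.
by case: (eqVneq s t) => [-> //|_]; rewrite mulr0 eqxx.
Qed.

Lemma pc_proj_eq0 n a (c : chain X n) :
  a \notin map (@simplex_component X n) (dom c) -> pc_proj a c = 0.
Proof.
move=> a_notin; apply/eqP/freeg_eqP => s; rewrite coeff_pc_proj coeff0.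
case: (boolP (s \in dom c)) => [s_in|/coeff_outdom -> //]; last by rewrite mul0rn.
by case: eqP => // s_a; case/negP: a_notin; rewrite -s_a map_f.
Qed.

Lemma pc_proj_decomp n (c : chain X n) :
  c = \sum_(a <- undup (map (@simplex_component X n) (dom c))) pc_proj a c.
Proof.
apply/eqP/freeg_eqP => s; rewrite raddf_sum /=.
case: (boolP (s \in dom c)) => s_in; last first.
  by rewrite coeff_outdom // big1 // => a _; rewrite coeff_pc_proj coeff_outdom ?mul0rn.
rewrite (bigD1_seq (simplex_component s)) ?undup_uniq ?mem_undup ?map_f //=.
rewrite coeff_pc_proj eqxx big1 ?addr0 // => a a_neq.
by rewrite coeff_pc_proj eq_sym (negbTE a_neq).
Qed.

End Projection.

Section Boundary.
Variables (X : topologicalType) (op : X -> X -> X).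
Hypothesis qop : topological_quandle op.

HB.instance Definition _ n :=
  GRing.isAdditive.Build (chain X n.+1) (chain X n) (@bd X op n) (lift_is_additive _).

Lemma bdU n k (s : 'rV[RR]_n.+2 -> X) : bd op << k *g s >> = k *: bd_gen op s.
Proof. exact: liftU. Qed.

Lemma dom_bd_gen n (s : 'rV[RR]_n.+2 -> X) : is_singular s ->
  {in dom (bd_gen op s), forall t, simplex_component t = simplex_component s}.
Proof.
move=> s_sing t /dom_sum_subset /flattenP [l /mapP [m]].
rewrite mem_filter lt0n => /andP [m_neq0 _] -> /domZ_subset /domB.
rewrite mem_cat !domU1 !inE => /orP [] /eqP ->.
  exact: simplex_component_dface.
exact: simplex_component_sop.
Qed.

Lemma pc_proj_bd_gen n a (s : 'rV[RR]_n.+2 -> X) : is_singular s ->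
  pc_proj a (bd_gen op s) = bd_gen op s *+ (simplex_component s == a).
Proof. by move=> s_sing; apply: pc_proj_supported; exact: dom_bd_gen. Qed.

Lemma pc_proj_bd n a (c : chain X n.+1) :
  chains_in X setT n.+1 c -> pc_proj a (bd op c) = bd op (pc_proj a c).
Proof.
move=> c_sing; rewrite -[c]freeg_sumE (raddf_sum (@bd X op n)) !(raddf_sum (@pc_proj X _ a)).
rewrite (raddf_sum (@bd X op n)); apply: eq_big_seq => s.
move=> /c_sing /simplex_inT s_sing.
by rewrite /= bdU pc_projZ pc_proj_bd_gen // pc_projU (raddfMn (@bd X op n)) /= bdU scalerMnr.
Qed.

End Boundary.

Section Subcomplex.
Variable X : topologicalType.
Implicit Types (a b : path_components X).

Lemma chains_in0 A n : chains_in X A n 0.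
Proof. by move=> s; rewrite dom0. Qed.

Lemma chains_inB A n (c d : chain X n) :
  chains_in X A n c -> chains_in X A n d -> chains_in X A n (c - d).
Proof. by move=> c_in d_in s /domB; rewrite mem_cat => /orP [/c_in|/d_in]. Qed.

Lemma chains_inD A n (c d : chain X n) :
  chains_in X A n c -> chains_in X A n d -> chains_in X A n (c + d).
Proof. by move=> c_in d_in s /domD_subset; rewrite mem_cat => /orP [/c_in|/d_in]. Qed.

Lemma chains_inP a n (c : chain X n) : chains_in X (sval a) n c <->
  chains_in X setT n c /\ {in dom c, forall s, simplex_component s = a}.
Proof.
split => [c_in|[c_sing c_a] s s_in].
  by split => s /c_in /simplex_inP [] // s_sing; exact/simplex_inT.
by apply/simplex_inP; split; [exact/simplex_inT/c_sing | exact: c_a].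
Qed.

Lemma chains_inT a n (c : chain X n) : chains_in X (sval a) n c -> chains_in X setT n c.
Proof. by case/chains_inP. Qed.

Lemma pc_proj_chains_in a b n (c : chain X n) :
  chains_in X (sval b) n c -> pc_proj a c = c *+ (b == a).
Proof. by case/chains_inP => _; exact: pc_proj_supported. Qed.

Lemma chains_in_pc_proj a n (c : chain X n) :
  chains_in X setT n c -> chains_in X (sval a) n (pc_proj a c).
Proof.
move=> c_sing; apply/chains_inP; split => s; rewrite mem_dom coeff_pc_proj;
  case: (eqVneq (simplex_component s) a) => [s_a|]; rewrite ?mulr0n ?eqxx //.
  by rewrite mulr1n -mem_dom => /c_sing.
Qed.

End Subcomplex.

Definition is_subgroup (G : zmodType) (B : set G) :=
  B 0 /\ forall x y, B x -> B y -> B (x - y).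

Section Cosets.
Context {G : zmodType} {B : set G} (B_subgroup : is_subgroup B).

Lemma subgroupN x : B x -> B (- x).
Proof. by case: B_subgroup => B0 BB Bx; rewrite -sub0r; exact: BB. Qed.

Lemma subgroupD x y : B x -> B y -> B (x + y).
Proof. by move=> Bx By; rewrite -[y]opprK; apply: B_subgroup.2 => //; exact: subgroupN. Qed.

Lemma coset_mem x y : coset B x y <-> B (y - x).
Proof.
split => [[b Bb <-]|Byx]; first by rewrite addrC addKr.
by exists (y - x) => //; rewrite addrC subrK.
Qed.

Lemma coset0 : coset B 0 = B.
Proof. by apply/seteqP; split => y; rewrite /= coset_mem subr0. Qed.

Lemma coset_eqE x y : coset B x = coset B y <-> B (x - y).
Proof.
split => [xy|Bxy].
  by apply/coset_mem; rewrite -xy; apply/coset_mem; rewrite subrr; exact: B_subgroup.1.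
apply/seteqP; split => t; rewrite /= !coset_mem => Bt.
  have -> : t - y = (t - x) + (x - y) by rewrite addrA subrK.
  exact: subgroupD.
have -> : t - x = (t - y) - (x - y) by rewrite opprB addrA subrK.
exact: B_subgroup.2.
Qed.

Lemma setadd_coset x y : setadd (coset B x) (coset B y) = coset B (x + y).
Proof.
apply/seteqP; split => t /=.
  case=> u /coset_mem Bu [v /coset_mem Bv <-]; apply/coset_mem.
  by rewrite opprD addrACA; exact: subgroupD.
move/coset_mem => Bt; exists x; first by apply/coset_mem; rewrite subrr; exact: B_subgroup.1.
by exists (t - x); [apply/coset_mem; rewrite -addrA -opprD | rewrite addrC subrK].
Qed.

End Cosets.

Section Homology.
Variables (X : topologicalType) (op : X -> X -> X).
Hypothesis qop : topological_quandle op.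
Implicit Types (a b : path_components X).

Lemma boundaries_subgroup A n : is_subgroup (boundaries X op A n).
Proof.
split; first by exists 0; [exact: chains_in0 | exact: raddf0].
move=> _ _ [c c_in <-] [d d_in <-]; exists (c - d); first exact: chains_inB.
exact: raddfB.
Qed.

Lemma boundariesT a n (c : chain X n) :
  boundaries X op (sval a) n c -> boundaries X op setT n c.
Proof. by case=> d d_in <-; exists d => //; exact: chains_inT d_in. Qed.

Lemma boundaries_pc_proj n (c : chain X n) :
  boundaries X op setT n c <-> forall a, boundaries X op (sval a) n (pc_proj a c).
Proof.
split => [[d d_sing <-] a|c_bd].
  by exists (pc_proj a d); [exact: chains_in_pc_proj | rewrite pc_proj_bd].
rewrite [c]pc_proj_decomp; apply: big_ind => [||a _]; last exact: boundariesT (c_bd a).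
  exact: (boundaries_subgroup _ _).1.
by move=> x y; apply: subgroupD; exact: boundaries_subgroup.
Qed.

Lemma cycles0 A n : cycles X op A n 0.
Proof. by split; [exact: chains_in0 | case: n => //= n; exact: raddf0]. Qed.

Lemma cyclesD A n (c d : chain X n) :
  cycles X op A n c -> cycles X op A n d -> cycles X op A n (c + d).
Proof.
move=> [c_in c_cyc] [d_in d_cyc]; split; first exact: chains_inD.
case: n c d c_cyc d_cyc {c_in d_in} => //= n c d c_cyc d_cyc.
by rewrite raddfD /= c_cyc d_cyc addr0.
Qed.

Lemma cyclesT a n (c : chain X n) : cycles X op (sval a) n c -> cycles X op setT n c.
Proof. by case=> c_in c_cyc; split => //; exact: chains_inT c_in. Qed.

Lemma cycles_pc_proj a n (c : chain X n) :
  cycles X op setT n c -> cycles X op (sval a) n (pc_proj a c).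
Proof.
move=> [c_sing c_cyc]; split; first exact: chains_in_pc_proj.
case: n c c_sing c_cyc => //= n c c_sing c_cyc.
by rewrite -pc_proj_bd // c_cyc raddf0.
Qed.

Definition split_class n (z : chain X n) a : set (chain X n) :=
  coset (boundaries X op (sval a) n) (pc_proj a z).

Definition glue_classes n (h : path_components X -> set (chain X n)) : set (chain X n) :=
  [set y | forall a, h a (pc_proj a y)].

Lemma glue_split_class n (z : chain X n) :
  glue_classes (split_class z) = coset (boundaries X op setT n) z.
Proof.
apply/seteqP; split => y.
  move=> y_z; apply/coset_mem/boundaries_pc_proj => a.
  by rewrite raddfB; apply/coset_mem/y_z.
move/coset_mem/boundaries_pc_proj => yz a.
by apply/coset_mem; rewrite -raddfB.
Qed.

Lemma split_classD n (z w : chain X n) :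
  split_class (z + w) = fun a => setadd (split_class z a) (split_class w a).
Proof.
by apply/funext => a; rewrite /split_class setadd_coset ?raddfD //; exact: boundaries_subgroup.
Qed.

Lemma split_class_eq n (z w : chain X n) :
  coset (boundaries X op setT n) z = coset (boundaries X op setT n) w ->
  split_class z = split_class w.
Proof.
move/(coset_eqE (boundaries_subgroup _ _))/boundaries_pc_proj => zw.
by apply/funext => a; apply/(coset_eqE (boundaries_subgroup _ _)); rewrite -raddfB.
Qed.

Lemma split_class_dsum n (z : chain X n) : cycles X op setT n z ->
  dsum (fun a => homology X op (sval a) n) (fun a => boundaries X op (sval a) n)
    (split_class z).
Proof.
move=> z_cyc; split => [a|]; first by exists (pc_proj a z) => //; exact: cycles_pc_proj.
apply: (@sub_finite_set _ _ [set` map (@simplex_component X n) (dom z)]).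
  move=> a /= a_nontriv; apply/negPn/negP => /pc_proj_eq0 za; apply: a_nontriv.
  by rewrite /split_class za coset0 //; exact: boundaries_subgroup.
by apply/finite_seqP; eexists.
Qed.

Lemma dsum_split_class n h :
  dsum (fun a => homology X op (sval a) n) (fun a => boundaries X op (sval a) n) h ->
  exists2 z, cycles X op setT n z & h = split_class z.
Proof.
case=> h_hom /finite_seqP [s s_supp].
have /choice [r r_rep] : forall a, exists c,
    cycles X op (sval a) n c /\ h a = coset (boundaries X op (sval a) n) c.
  by move=> a; case: (h_hom a) => c c_cyc ->; exists c.
pose z := \sum_(b <- undup s) r b.
have pc_proj_z a : pc_proj a z = if a \in s then r a else 0.
  rewrite raddf_sum (eq_bigr (fun b => r b *+ (b == a))); last first.
    by move=> b _; apply: pc_proj_chains_in; case: (r_rep b) => [[]].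
  case: ifPn => [a_in|a_notin].
    rewrite (bigD1_seq a) ?undup_uniq ?mem_undup //= eqxx big1 ?addr0 //.
    by move=> b /negbTE ->.
  rewrite big1_seq // => b /andP [_]; rewrite mem_undup.
  by case: eqVneq => [-> /(negP a_notin)|].
exists z.
  by apply: big_ind => [||b _]; [exact: cycles0 | exact: cyclesD | exact: cyclesT (r_rep b).1].
apply/funext => a; rewrite /split_class pc_proj_z; case: ifPn => [_|a_notin].
  exact: (r_rep a).2.
rewrite coset0; apply: contrapT => h_nontriv; case/negP: a_notin.
by have : [set i | h i <> boundaries X op (sval i) n] a by []; rewrite s_supp.
Qed.

End Homology.

Theorem mainTheorem6 (X : topologicalType) (op : X -> X -> X) :
  topological_quandle op ->
  forall n : nat,
    group_iso
      (dsum (fun a : path_components X => homology X op (sval a) n)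
            (fun a => boundaries X op (sval a) n))
      (fun h k a => setadd (h a) (k a))
      (homology X op setT n) setadd.
Proof.
move=> qop n; exists (@glue_classes X n); split.
- move=> _ /dsum_split_class [z z_cyc ->].
  by exists z => //; rewrite glue_split_class.
- move=> _ _ /dsum_split_class [z _ ->] /dsum_split_class [w _ ->].
  rewrite -split_classD !glue_split_class // setadd_coset //.
  exact: boundaries_subgroup.
- move=> _ _ /dsum_split_class [z _ ->] /dsum_split_class [w _ ->].
  by rewrite !glue_split_class //; exact: split_class_eq.
- move=> _ [z z_cyc ->]; exists (split_class op z); first exact: split_class_dsum.
  exact: glue_split_class.
Qed.
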